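(* The class of MPNNs can count $2$-paths at node level: for all node-graph pairs $(i_1,G_1),(i_2,G_2)$ with $C(2\text{-path},i_1,G_1)\ne C(2\text{-path},i_2,G_2)$, there exists an MPNN with $h^{(T)}_{i_1}(G_1)\ne h^{(T)}_{i_2}(G_2)$.
   Context: Graphs are finite, simple, undirected, $G=(V,E)$, possibly carrying node attributes $x_v$ and edge attributes $e_{u,v}$ (a fixed constant when absent). $N(v)$ is the neighbour set of $v$. A $2$-path is a sequence of edges $(v_1,v_2),(v_2,v_3)$ with $v_1,v_2,v_3$ pairwise distinct; two paths are identified when their edge sets coincide; $C(2\text{-path},i,G)$ is the number of inequivalent $2$-paths starting from $i$ (i.e. with $v_1=i$). A class $\mathcal F$ of functions on node-graph pairs can count $S$ at node level if for all $(i_1,G_1),(i_2,G_2)$ with $C(S,i_1,G_1)\ne C(S,i_2,G_2)$ there is $f\in\mathcal F$ with $f(i_1,G_1)\ne f(i_2,G_2)$. MPNNs. An MPNN is specified by $T$ and arbitrary functions $M_t$ (values in some $\mathbb R^{d_t}$), $U_t$, $t=0,\dots,T-1$: $h^{(0)}_i=x_i$ and $h^{(t+1)}_i=U_t\big(h^{(t)}_i,\sum_{j\in N(i)}M_t(h^{(t)}_i,h^{(t)}_j,e_{i,j})\big)$. The node-level function computed is $(i,G)\mapsto h^{(T)}_i$; the class of MPNNs consists of all such choices. *)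

From HB Require Import structures.
From mathcomp Require Import all_boot all_order all_algebra.
From mathcomp Require Import reals.
Set Implicit Arguments. Unset Strict Implicit. Unset Printing Implicit Defensive.
Import GRing.Theory Num.Theory.
Local Open Scope ring_scope.

Record graph (R : nzRingType) (dx de : nat) := Graph {
  gV : finType;
  gadj : rel gV;
  gadj_sym : symmetric gadj;
  gadj_irr : irreflexive gadj;
  gx : gV -> 'rV[R]_dx;
  ge : gV -> gV -> 'rV[R]_de;
  ge_sym : forall u v, ge u v = ge v u }.
Arguments gV {R dx de} G : rename.
Arguments gadj {R dx de} G _ _ : rename.
Arguments gx {R dx de} G _ : rename.
Arguments ge {R dx de} G _ _ : rename.

Definition layer_dim (dx : nat) (hdim : nat -> nat) (t : nat) : nat :=
  if t is t'.+1 then hdim t' else dx.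

Record mpnn (R : nzRingType) (dx de : nat) := MPNN {
  depth : nat;
  hdim : nat -> nat;
  mdim : nat -> nat;
  msg : forall t, 'rV[R]_(layer_dim dx hdim t) -> 'rV[R]_(layer_dim dx hdim t) ->
                  'rV[R]_de -> 'rV[R]_(mdim t);
  upd : forall t, 'rV[R]_(layer_dim dx hdim t) -> 'rV[R]_(mdim t) ->
                  'rV[R]_(layer_dim dx hdim t.+1) }.
Arguments depth {R dx de} N : rename.
Arguments hdim {R dx de} N _ : rename.
Arguments mdim {R dx de} N _ : rename.
Arguments msg {R dx de} N t _ _ _ : rename.
Arguments upd {R dx de} N t _ _ : rename.

Fixpoint hstate (R : nzRingType) (dx de : nat) (N : mpnn R dx de) (G : graph R dx de)
  (t : nat) : gV G -> 'rV[R]_(layer_dim dx (hdim N) t) :=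
  match t as t0 return gV G -> 'rV[R]_(layer_dim dx (hdim N) t0) with
  | 0 => fun i => gx G i
  | t'.+1 => fun i =>
      upd N t' (@hstate R dx de N G t' i)
        (\sum_(j | gadj G i j) msg N t' (@hstate R dx de N G t' i) (@hstate R dx de N G t' j) (ge G i j))
  end.

Arguments hstate {R dx de} N G t _.

Definition mpnn_out (R : nzRingType) (dx de : nat) (N : mpnn R dx de) (G : graph R dx de)
  (i : gV G) : 'rV[R]_(layer_dim dx (hdim N) (depth N)) :=
  @hstate R dx de N G (depth N) i.

(* 2-paths starting at i: pairs (v2, v3) giving edges (i,v2),(v2,v3),
   with i, v2, v3 pairwise distinct. *)
Definition two_paths_from (R : nzRingType) (dx de : nat) (G : graph R dx de) (i : gV G)
  : {set gV G * gV G} :=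
  [set p : gV G * gV G | [&& gadj G i p.1, gadj G p.1 p.2,
                             i != p.1, p.1 != p.2 & i != p.2]].

Definition two_path_edges (T : finType) (i : T) (p : T * T) : {set {set T}} :=
  [set [set i; p.1]; [set p.1; p.2]].

Definition count_2path (R : nzRingType) (dx de : nat) (G : graph R dx de) (i : gV G) : nat :=
  #|[set two_path_edges i p | p in two_paths_from i]|.
Arguments mpnn_out {R dx de} N G i.
Arguments two_paths_from {R dx de} G i.
Arguments count_2path {R dx de} G i.

(** A 2-path from [i] is determined by its edge set, so [C(2-path, i, G)] is
    the number of pairs [(j, k)] with [j ~ i], [k ~ j] and [k <> i], that is
    [\sum_(j ~ i) (deg j - 1)].  A two-layer MPNN computes this sum: the first
    layer sends the constant message [1], so that [h^(1)_j = deg j], and the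
    second sends [h^(1)_j - 1].  Over a field of characteristic 0 the output
    [C(2-path, i, G)%:R] separates nodes with different counts. *)

From HB Require Import structures.
From mathcomp Require Import all_boot all_order all_algebra.
From mathcomp Require Import reals.
Set Implicit Arguments. Unset Strict Implicit. Unset Printing Implicit Defensive.
Import GRing.Theory Num.Theory.
Local Open Scope ring_scope.

Lemma two_path_edges_inj (T : finType) (i a b c d : T) :
  i != a -> i != c -> c != d -> i != d ->
  two_path_edges i (a, b) = two_path_edges i (c, d) -> (a, b) = (c, d).
Proof.
rewrite /two_path_edges /= => ia ic cd id E.
have : [set i; a] \in [set [set i; c]; [set c; d]] by rewrite -E set21.
rewrite in_set2 => /orP [/eqP Eia | /eqP Eia]; last first.
  have : i \in [set c; d] by rewrite -Eia set21.
  by rewrite in_set2 (negbTE ic) (negbTE id).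
have : a \in [set i; c] by rewrite -Eia set22.
rewrite in_set2 eq_sym (negbTE ia) /= => /eqP ac; subst c.
have : [set a; d] \in [set [set i; a]; [set a; b]] by rewrite E set22.
rewrite in_set2 => /orP [/eqP Ead | /eqP Ead].
- have : d \in [set i; a] by rewrite -Ead set22.
  by rewrite in_set2 eq_sym (negbTE id) eq_sym (negbTE cd).
- have : d \in [set a; b] by rewrite -Ead set22.
  by rewrite in_set2 eq_sym (negbTE cd) /= => /eqP ->.
Qed.

Section TwoPaths.

Variables (R : nzRingType) (dx de : nat) (G : graph R dx de).

Definition degree (v : gV G) : nat := #|gadj G v|.

Lemma count_2pathE (i : gV G) : count_2path G i = #|two_paths_from G i|.
Proof.
apply: card_in_imset => -[a b] [c d].
rewrite !inE /= => /and5P [_ _ ia _ ib] /and5P [_ _ ic cd id].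
exact: two_path_edges_inj.
Qed.

Lemma card_two_paths_from (i : gV G) :
  #|two_paths_from G i| = (\sum_(j | gadj G i j) (degree j).-1)%N.
Proof.
rewrite -sum1_card.
rewrite (eq_bigl (fun p => gadj G i p.1 && (gadj G p.1 p.2 && (p.2 != i)))).
  rewrite -(pair_big_dep (gadj G i) (fun j k => gadj G j k && (k != i))
                         (fun _ _ => 1%N)) /=.
  apply: eq_bigr => j ij; rewrite sum1_card /degree.
  rewrite (cardD1 i (gadj G j)) [i \in _](gadj_sym j i) ij add1n /=.
  by apply: eq_card => k; rewrite !inE andbC.
move=> [j k] /=; rewrite inE /=.
apply/and5P/and3P => [[-> -> _ _ ik] | [ij jk ki]]; first by rewrite eq_sym ik.
split=> //; last by rewrite eq_sym.
- by apply: contraTneq ij => <-; rewrite gadj_irr.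
- by apply: contraTneq jk => <-; rewrite gadj_irr.
Qed.

End TwoPaths.

Section TwoPathCounter.

Variables (R : nzRingType) (dx de : nat).

Definition two_path_counter_msg t :
  'rV[R]_(layer_dim dx (fun=> 1%N) t) -> 'rV[R]_(layer_dim dx (fun=> 1%N) t) ->
  'rV[R]_de -> 'rV[R]_1 :=
  if t is _.+1 then fun _ hj _ => hj - const_mx 1 else fun _ _ _ => const_mx 1.

Definition two_path_counter : mpnn R dx de :=
  @MPNN R dx de 2 (fun=> 1%N) (fun=> 1%N) two_path_counter_msg (fun _ _ m => m).

Variable G : graph R dx de.

Lemma two_path_counter_degree (v : gV G) :
  hstate two_path_counter G 1 v = const_mx (degree v)%:R.
Proof.
apply/matrixP => a b; rewrite /= !mxE summxE.
by rewrite (eq_bigr (fun=> 1)) ?natr_sum ?sumr_const // => j _; rewrite mxE.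
Qed.

Lemma two_path_counter_out (i : gV G) :
  mpnn_out two_path_counter G i = const_mx (count_2path G i)%:R.
Proof.
have -> : mpnn_out two_path_counter G i =
  \sum_(j | gadj G i j) (hstate two_path_counter G 1 j - const_mx 1) by [].
rewrite count_2pathE card_two_paths_from natr_sum.
apply/matrixP => a b; rewrite !mxE summxE.
apply: eq_bigr => j ij; rewrite two_path_counter_degree !mxE -subn1 natrB //.
by apply/card_gt0P; exists i; rewrite [i \in _]gadj_sym.
Qed.

End TwoPathCounter.

Theorem theorem6 (R : realType) (dx de : nat)
  (G1 G2 : graph R dx de) (i1 : gV G1) (i2 : gV G2) :
  count_2path G1 i1 <> count_2path G2 i2 ->
  exists N : mpnn R dx de, mpnn_out N G1 i1 <> mpnn_out N G2 i2.
Proof.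
move=> count_neq; exists (two_path_counter R dx de).
rewrite !two_path_counter_out => /matrixP /(_ ord0 ord0).
by rewrite !mxE => /eqP; rewrite eqr_nat => /eqP /count_neq.
Qed.
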